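(* Let $n\ge1$ and let $\mathscr{Q}$ be the set of all subsets of the Hamming cube $\{0,1\}^n\subset\ell_1^{(n)}$ (with the $\ell_1$ metric) that have strict $1$-negative type. Then there exists $q>1$ such that $\mathfrak{q}(S)\ge q$ for all $S\in\mathscr{Q}$.
   Context: For $p\ge0$, a metric space $(X,d)$ has $p$-negative type if for all finite $\{x_1,\ldots,x_m\}\subseteq X$ ($m\ge2$) and all reals $\eta_1,\ldots,\eta_m$ with $\sum\eta_i=0$, $\sum_{i,j}d(x_i,x_j)^p\eta_i\eta_j\le 0$; it has strict $p$-negative type if moreover this inequality is strict whenever $(\eta_1,\ldots,\eta_m)\ne0$. $p$ is a generalized roundness exponent if for all $m$ and all $a_1,\ldots,a_m,b_1,\ldots,b_m\in X$, $\sum_{k<l}\{d(a_k,a_l)^p+d(b_k,b_l)^p\}\le\sum_{j,i}d(a_j,b_i)^p$; the generalized roundness $\mathfrak{q}(X)$ is the supremum of all generalized roundness exponents. *)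

From HB Require Import structures.
From mathcomp Require Import all_boot all_order all_algebra.
From mathcomp Require Import all_classical all_reals.
From mathcomp Require Import ereal exp.
Set Implicit Arguments. Unset Strict Implicit. Unset Printing Implicit Defensive.
Import Order.TTheory GRing.Theory Num.Theory.
Local Open Scope ring_scope.
Local Open Scope classical_set_scope.

Section Defs.
Variable R : realType.

Definition cube (n : nat) := {ffun 'I_n -> bool}.

Definition hamming_dist (n : nat) (x y : cube n) : R :=
  \sum_(i < n) `| (x i : nat)%:R - (y i : nat)%:R |.

Variable T : Type.
Variable d : T -> T -> R.

Definition neg_type (S : set T) (p : R) : Prop :=
  forall (m : nat) (x : 'I_m -> T) (eta : 'I_m -> R),
    (2 <= m)%N -> injective x -> (forall i, S (x i)) ->
    \sum_(i < m) eta i = 0 ->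
    \sum_(i < m) \sum_(j < m) d (x i) (x j) `^ p * eta i * eta j <= 0.

Definition strict_neg_type (S : set T) (p : R) : Prop :=
  neg_type S p /\
  forall (m : nat) (x : 'I_m -> T) (eta : 'I_m -> R),
    (2 <= m)%N -> injective x -> (forall i, S (x i)) ->
    \sum_(i < m) eta i = 0 -> (exists i, eta i != 0) ->
    \sum_(i < m) \sum_(j < m) d (x i) (x j) `^ p * eta i * eta j < 0.

Definition gr_exponent (S : set T) (p : R) : Prop :=
  forall (m : nat) (a b : 'I_m -> T),
    (forall i, S (a i)) -> (forall i, S (b i)) ->
    \sum_(k < m) \sum_(l < m | (k < l)%N) (d (a k) (a l) `^ p + d (b k) (b l) `^ p)
    <= \sum_(j < m) \sum_(i < m) d (a j) (b i) `^ p.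

Definition gen_roundness (S : set T) : \bar R :=
  ereal_sup [set (p%:E) | p in [set p : R | 0 <= p /\ gr_exponent S p]].

End Defs.

From HB Require Import structures.
From mathcomp Require Import all_boot all_order all_algebra.
From mathcomp Require Import all_classical all_reals.
From mathcomp Require Import ereal exp.
From mathcomp Require Import topology normedtype derive.
From mathcomp Require Import ring lra.
Import Order.TTheory GRing.Theory Num.Theory numFieldNormedType.Exports.
Local Open Scope ring_scope.
Local Open Scope classical_set_scope.

(* On a finite set A of points, strict 1-negative type says that the quadratic
   form v |-> sum_ij d(a_i, a_j) v_i v_j is negative definite on the hyperplane
   sum_i v_i = 0; by compactness of the unit sphere of that hyperplane it is
   bounded above by -c |v|^2 for some c > 0.  Hamming distances are integers in
   [0, n], so for q close enough to 1 the kernel d^q stays within c / (|A|^2 + 1) of d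
   and the form with kernel d^q is still nonpositive on the hyperplane.
   Evaluating it at 1_{a_1} + ... + 1_{a_m} - 1_{b_1} - ... - 1_{b_m} gives the
   generalized roundness inequality for the exponent q.  The cube has finitely
   many subsets, so the least of these exponents works for all of them. *)

Section quadratic_form.
Context {R : realType} {N : nat}.

Definition qform (E : 'I_N -> 'I_N -> R) (v : 'rV[R]_N) : R :=
  \sum_(i < N) \sum_(j < N) E i j * v ord0 i * v ord0 j.

Definition coord_sum (v : 'rV[R]_N) : R := \sum_(i < N) v ord0 i.

Lemma coord_sum_continuous : continuous coord_sum.
Proof.
apply: continuous_big => [|i _]; [exact: add_continuous | exact: coord_continuous].
Qed.

Lemma qform_continuous E : continuous (qform E).
Proof.
have term_cont i j : continuous (fun v : 'rV[R]_N => E i j * v ord0 i * v ord0 j).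
  move=> v; apply: (@continuousM _ _ (fun v : 'rV[R]_N => E i j * v ord0 i)
    (fun v => v ord0 j)); last exact: coord_continuous.
  apply: (@continuousM _ _ (fun=> E i j) (fun v : 'rV[R]_N => v ord0 i));
    [exact: cst_continuous | exact: coord_continuous].
apply: continuous_big => [|i _]; first exact: add_continuous.
by apply: continuous_big => [|j _]; [exact: add_continuous | exact: term_cont].
Qed.

Lemma qformZ E a v : qform E (a *: v) = a ^+ 2 * qform E v.
Proof.
rewrite /qform mulr_sumr; apply: eq_bigr => i _; rewrite mulr_sumr.
by apply: eq_bigr => j _; rewrite !mxE; ring.
Qed.

Lemma qform0 E : qform E 0 = 0.
Proof. by rewrite -(scale0r (0 : 'rV[R]_N)) qformZ expr2 !mul0r. Qed.

Lemma coord_sumZ a v : coord_sum (a *: v) = a * coord_sum v.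
Proof. by rewrite /coord_sum mulr_sumr; apply: eq_bigr => i _; rewrite mxE. Qed.

Lemma qform_sum_expand m E (v : 'rV[R]_N) (al : 'I_m -> 'I_N -> R) :
  (forall i, v ord0 i = \sum_(k < m) al k i) ->
  qform E v = \sum_(k < m) \sum_(l < m) \sum_(i < N) al k i * \sum_(j < N) al l j * E i j.
Proof.
move=> vE; rewrite /qform.
transitivity (\sum_(i < N) \sum_(j < N) \sum_(k < m) \sum_(l < m) al k i * (al l j * E i j)).
  apply: eq_bigr => i _; apply: eq_bigr => j _.
  rewrite !vE -mulrA big_distrlr mulr_sumr; apply: eq_bigr => k _.
  by rewrite mulr_sumr; apply: eq_bigr => l _ /=; ring.
under eq_bigr do rewrite exchange_big.
rewrite exchange_big; apply: eq_bigr => k _.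
under eq_bigr do rewrite exchange_big.
rewrite exchange_big; apply: eq_bigr => l _; apply: eq_bigr => i _.
by rewrite mulr_sumr.
Qed.

Lemma normr_coord_le (v : 'rV[R]_N) i : `|v ord0 i| <= `|v|.
Proof.
rewrite -[`|v|]/(mx_norm v) mx_normrE; apply/bigmax_geP; right.
by exists (ord0, i).
Qed.

Lemma qform_le_perturb E D eps v : 0 <= eps ->
  (forall i j, `|E i j - D i j| <= eps) ->
  qform E v <= qform D v + (N * N)%:R * eps * `|v| ^+ 2.
Proof.
move=> eps_ge0 ED_le.
have -> : qform E v = qform D v + qform (fun i j => E i j - D i j) v.
  rewrite /qform -big_split; apply: eq_bigr => i _; rewrite -big_split.
  by apply: eq_bigr => j _ /=; ring.
rewrite lerD2l.
have -> : (N * N)%:R * eps * `|v| ^+ 2 = \sum_(i < N) \sum_(j < N) eps * `|v| ^+ 2.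
  by rewrite !sumr_const card_ord -mulrnA natrM -mulr_natl; ring.
apply: ler_sum => i _; apply: ler_sum => j _.
apply: le_trans (ler_norm _) _.
rewrite !normrM expr2 mulrA.
apply: ler_pM; rewrite ?mulr_ge0 // ?normr_coord_le //.
by apply: ler_pM; rewrite ?normr_coord_le.
Qed.

(* The maximum of the form on the compact unit sphere of the hyperplane is
   negative. *)
Lemma qform_neg_bound D :
  (forall v, coord_sum v = 0 -> v != 0 -> qform D v < 0) ->
  exists2 c : R, 0 < c & forall v, coord_sum v = 0 -> qform D v <= - c * `|v| ^+ 2.
Proof.
move=> D_neg.
pose K := coord_sum @^-1` [set 0] `&` (fun v : 'rV[R]_N => `|v|) @^-1` [set 1].
have normalize_in_K v : coord_sum v = 0 -> v != 0 -> K (`|v|^-1 *: v).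
  move=> v0 vN0; split => /=; first by rewrite coord_sumZ v0 mulr0.
  by rewrite normrZ normfV normr_id mulVf // normr_eq0.
have qform_normalize v : v != 0 -> qform D v = `|v| ^+ 2 * qform D (`|v|^-1 *: v).
  by move=> vN0; rewrite qformZ mulrA -exprMn mulfV ?expr1n ?mul1r // normr_eq0.
have [[w Kw]|K0] := pselect (K !=set0); last first.
  exists 1 => // v v0; have [->|vN0] := eqVneq v 0.
    by rewrite qform0 normr0 expr2 !mulr0.
  by exfalso; apply: K0; exists (`|v|^-1 *: v); exact: normalize_in_K.
have K_compact : compact K.
  apply: bounded_closed_compact.
    by exists 1; split => // M M1 v [_ /= ->]; exact: ltW.
  apply: closedI; apply: preimage_closed; rewrite ?closed_eq //.
  - by move=> x _; exact: coord_sum_continuous.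
  - by move=> x _; exact: norm_continuous.
have [c cK c_max] := EVT_max_rV (ex_intro _ w Kw) K_compact
  (continuous_subspaceT (@qform_continuous D)).
move: cK; rewrite inE => -[/= c0 c1].
have cN0 : c != 0 by rewrite -normr_eq0 c1 oner_eq0.
exists (- qform D c); first by rewrite oppr_gt0 D_neg.
move=> v v0; have [->|vN0] := eqVneq v 0.
  by rewrite qform0 normr0 expr2 !mulr0.
rewrite qform_normalize // opprK mulrC; apply: ler_wpM2r; first exact: sqr_ge0.
by apply: c_max; rewrite inE; exact: normalize_in_K.
Qed.

End quadratic_form.

Section powR_near_identity.
Context {R : realType}.

Lemma bernoulli_le (h : R) k : 0 <= h -> 1 + k%:R * h <= (1 + h) ^+ k.
Proof.
move=> h0; elim: k => [|k IH]; first by rewrite mul0r addr0 expr0.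
rewrite exprSr -natr1.
have : (1 + k%:R * h) * (1 + h) <= (1 + h) ^+ k * (1 + h) by apply: ler_wpM2r; lra.
have : 0 <= k%:R * h * h by rewrite !mulr_ge0.
nra.
Qed.

Lemma powR_invn_le {n k : nat} {h : R} : 0 < h -> n%:R < k.+1%:R * h ->
  n%:R `^ k.+1%:R^-1 <= 1 + h.
Proof.
move=> h0 nk; rewrite leNgt; apply/negP => lt_root.
have root_pow : (n%:R `^ k.+1%:R^-1) `^ k.+1%:R = n%:R :> R.
  by rewrite -powRrM mulVf // powRr1.
have h1 : 0 <= 1 + h by rewrite addr_ge0 // ltW.
have : (1 + h) `^ k.+1%:R <= n%:R.
  rewrite -root_pow; apply: ge0_ler_powR; rewrite ?nnegrE ?powR_ge0 //.
  exact: ltW.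
rewrite powR_mulrn // => le_pow.
have := bernoulli_le h k.+1 (ltW h0); lra.
Qed.

Lemma powR_near_id (n : nat) (eps : R) : 0 < eps ->
  exists2 q : R, 1 < q & forall k : nat, (k <= n)%N -> `|k%:R `^ q - k%:R| <= eps.
Proof.
move=> eps0; pose h := eps / n.+1%:R.
have h0 : 0 < h by rewrite divr_gt0.
pose K := Num.truncn (n%:R / h).
have nK : n%:R < K.+1%:R * h by rewrite -ltr_pdivrMr // truncnS_gt.
exists (1 + K.+1%:R^-1); first by rewrite ltrDl invr_gt0.
have nh_le : n%:R * h <= eps.
  by rewrite /h mulrCA ger_pMr // ler_pdivrMr ?ltr0n // mul1r ler_nat.
case=> [_|k kn]; first by rewrite powR0 ?subr0 ?normr0 ?ltW // gt_eqF // ltr_wpDr.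
rewrite powRD ?pnatr_eq0 ?implybT // powRr1 //.
set u := _ `^ _.
have u_ge1 : 1 <= u.
  by rewrite -(powRr0 k.+1%:R) ler_powR ?ler1n ?invr_ge0.
have u_le : u <= 1 + h.
  apply: le_trans (powR_invn_le h0 nK).
  by apply: ge0_ler_powR; rewrite ?nnegrE ?invr_ge0 ?ler_nat.
have kn' : k.+1%:R <= n%:R :> R by rewrite ler_nat.
rewrite -[X in _ - X]mulr1 -mulrBr ger0_norm ?mulr_ge0 ?subr_ge0 //.
apply: le_trans nh_le; apply: ler_pM; rewrite ?subr_ge0 //; lra.
Qed.

End powR_near_identity.

Lemma sum_sym_offdiag (R : pzRingType) m (f : 'I_m -> 'I_m -> R) :
  (forall k l, f k l = f l k) -> (forall k, f k k = 0) ->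
  \sum_(k < m) \sum_(l < m) f k l = 2 * \sum_(k < m) \sum_(l < m | (k < l)%N) f k l.
Proof.
move=> f_sym f_diag.
have split_row k : \sum_(l < m) f k l =
    \sum_(l < m | (k < l)%N) f k l + \sum_(l < m | (l < k)%N) f k l.
  rewrite (bigID (fun l : 'I_m => (k < l)%N)) /=; congr (_ + _).
  rewrite (bigID (fun l : 'I_m => (l < k)%N)) /= [X in _ + X]big1 ?addr0.
    by apply: eq_bigl => l; case: ltngtP.
  move=> l; rewrite -!leqNgt => /andP[lk kl].
  by rewrite (@ord_inj _ l k) ?f_diag //; apply/eqP; rewrite eqn_leq lk.
under eq_bigr do rewrite split_row.
rewrite big_split /= mulr2n mulrDl mul1r; congr (_ + _).
rewrite (exchange_big_dep xpredT) //=; apply: eq_bigr => k _.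
by apply: eq_bigr => l _; rewrite f_sym.
Qed.

Section finite_metric.
Context {R : realType} {T : finType} (d : T -> T -> R).
Hypotheses (d_sym : forall x y, d x y = d y x) (d_xx : forall x, d x x = 0).
Variable A : {set T}.
Local Notation N := #|A|.

Definition point (i : 'I_N) : T := enum_val i.

Definition dist_pow (p : R) (i j : 'I_N) : R := d (point i) (point j) `^ p.

Lemma strict_neg_type_qform (p : R) : strict_neg_type d (fun x => x \in A) p ->
  forall v, coord_sum v = 0 -> v != 0 -> qform (dist_pow p) v < 0.
Proof.
move=> [_ d_strict] v v0 vN0.
have [i vi] : exists i, v ord0 i != 0.
  apply/existsP; apply: contraNT vN0; rewrite negb_exists => /forallP v_0.
  by apply/eqP/rowP => j; rewrite mxE; apply/eqP; move: (v_0 j); rewrite negbK.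
have N_ge2 : (2 <= N)%N.
  rewrite ltnNge; apply: contra vi => N_le1; apply/eqP.
  rewrite -v0 /coord_sum (bigD1 i) //= big1 ?addr0 // => j ji.
  have ord_val0 (k : 'I_N) : k = 0%N :> nat.
    by apply/eqP; rewrite -leqn0 -ltnS (leq_trans (ltn_ord k) N_le1).
  by move: ji; rewrite (@ord_inj _ j i) ?eqxx // !ord_val0.
apply: (d_strict N point (fun i => v ord0 i) N_ge2) => //.
- exact: enum_val_inj.
- by move=> k; exact: enum_valP.
- by exists i.
Qed.

Lemma sum_point_indicator z (G : T -> R) : z \in A ->
  \sum_(i < N) (z == point i)%:R * G (point i) = G z.
Proof.
move=> zA; rewrite -(big_enum_val (fun x => (z == x)%:R * G x)) /=.
rewrite (bigD1 z) //= eqxx mul1r big1 ?addr0 // => x /andP[_ xz].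
by rewrite eq_sym (negbTE xz) mul0r.
Qed.

Section signed_indicator.
Variables (m : nat) (a b : 'I_m -> T).
Hypotheses (aA : forall k, a k \in A) (bA : forall k, b k \in A).

Definition signed_weight (k : 'I_m) (i : 'I_N) : R :=
  (a k == point i)%:R - (b k == point i)%:R.

Definition signed_indicator : 'rV[R]_N := \row_i \sum_(k < m) signed_weight k i.

Lemma sum_signed_weight k (G : T -> R) :
  \sum_(i < N) signed_weight k i * G (point i) = G (a k) - G (b k).
Proof.
rewrite -(sum_point_indicator _ G (aA k)) -(sum_point_indicator _ G (bA k)) -sumrB.
by apply: eq_bigr => i _; rewrite mulrBl.
Qed.

Lemma coord_sum_signed_indicator : coord_sum signed_indicator = 0.
Proof.
rewrite /coord_sum; under eq_bigr do rewrite mxE.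
rewrite exchange_big big1 //= => k _.
rewrite -[RHS](subrr (1 : R)) -(sum_signed_weight k (fun=> 1)).
by apply: eq_bigr => i _; rewrite mulr1.
Qed.

Lemma qform_signed_indicator (g : T -> T -> R) :
  qform (fun i j => g (point i) (point j)) signed_indicator =
  \sum_(k < m) \sum_(l < m)
     (g (a k) (a l) - g (a k) (b l) - (g (b k) (a l) - g (b k) (b l))).
Proof.
rewrite (@qform_sum_expand _ _ m _ _ signed_weight); last by move=> i; rewrite mxE.
apply: eq_bigr => k _; apply: eq_bigr => l _.
under eq_bigr do rewrite sum_signed_weight.
exact: (sum_signed_weight k (fun z => g z (a l) - g z (b l))).
Qed.

End signed_indicator.

(* Evaluating the form at [signed_indicator a b] yields twice the difference of
   the two sides of the generalized roundness inequality. *)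
Lemma gr_exponent_of_qform (p : R) : p != 0 ->
  (forall v, coord_sum v = 0 -> qform (dist_pow p) v <= 0) ->
  gr_exponent d (fun x => x \in A) p.
Proof.
move=> p0 neg_p m a b aA bA.
have := neg_p _ (coord_sum_signed_indicator _ _ _ aA bA).
rewrite /dist_pow (qform_signed_indicator _ _ _ aA bA (fun x y => d x y `^ p)).
have pairs_sym (c : 'I_m -> T) : \sum_(k < m) \sum_(l < m) d (c k) (c l) `^ p =
    2 * \sum_(k < m) \sum_(l < m | (k < l)%N) d (c k) (c l) `^ p.
  by apply: sum_sym_offdiag => [k l|k]; [rewrite d_sym | rewrite d_xx powR0].
have cross_sym : \sum_(k < m) \sum_(l < m) d (b k) (a l) `^ p =
    \sum_(k < m) \sum_(l < m) d (a k) (b l) `^ p.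
  by rewrite exchange_big; apply: eq_bigr => k _; apply: eq_bigr => l _; rewrite d_sym.
under eq_bigr do rewrite !sumrB.
rewrite !sumrB !pairs_sym cross_sym => form_le0.
under eq_bigr do rewrite big_split /=.
rewrite big_split /=.
lra.
Qed.

End finite_metric.

Arguments strict_neg_type_qform {R T d A p}.

Lemma gr_exponent_le_gen_roundness (R : realType) (T : Type) (d : T -> T -> R)
    (S : set T) (p : R) :
  0 <= p -> gr_exponent d S p -> (p%:E <= gen_roundness d S)%E.
Proof. by move=> p0 Sp; apply: ereal_sup_ubound; exists p. Qed.

Section hamming_cube.
Context {R : realType} {n : nat}.
Local Notation hd := (@hamming_dist R n).

Lemma hamming_distE (x y : cube n) : hd x y = (\sum_(i < n) (x i != y i))%:R.
Proof.
rewrite /hamming_dist natr_sum; apply: eq_bigr => i _.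
by case: (x i); case: (y i); rewrite /= ?subrr ?subr0 ?sub0r ?normrN ?normr0 ?normr1.
Qed.

Lemma hamming_count_le (x y : cube n) : (\sum_(i < n) (x i != y i) <= n)%N.
Proof.
rewrite -[X in (_ <= X)%N]card_ord -sum1_card.
by apply: leq_sum => i _; case: (_ != _).
Qed.

Lemma hamming_dist_sym (x y : cube n) : hd x y = hd y x.
Proof. by apply: eq_bigr => i _; rewrite distrC. Qed.

Lemma hamming_dist_xx (x : cube n) : hd x x = 0.
Proof. by rewrite /hamming_dist big1 // => i _; rewrite subrr normr0. Qed.

Lemma cube_gr_exponent {A : {set cube n}} :
  strict_neg_type hd (fun x => x \in A) 1 ->
  exists2 q : R, 1 < q & gr_exponent hd (fun x => x \in A) q.
Proof.
move=> A_strict; pose N := #|A|.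
have [c c0 c_bound] := qform_neg_bound _ (strict_neg_type_qform A_strict).
pose eps := c / (N * N).+1%:R.
have eps0 : 0 < eps by rewrite divr_gt0.
have NN_eps : (N * N)%:R * eps <= c.
  by rewrite /eps mulrCA ger_pMr // ler_pdivrMr ?ltr0n // mul1r ler_nat.
have [q q1 q_near] := powR_near_id n eps eps0.
exists q => //; apply: gr_exponent_of_qform.
- exact: hamming_dist_sym.
- exact: hamming_dist_xx.
- by rewrite gt_eqF // (lt_trans ltr01).
move=> v v0; apply: le_trans (qform_le_perturb _ (dist_pow hd A 1) _ _ (ltW eps0) _) _.
  by move=> i j; rewrite /dist_pow hamming_distE powRr1 ?ler0n ?q_near ?hamming_count_le.
have := c_bound v v0; have : 0 <= c - (N * N)%:R * eps by rewrite subr_ge0.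
have := sqr_ge0 `|v|; nra.
Qed.

Lemma cube_set_roundness_bound (A : {set cube n}) : exists2 q : R, 1 < q &
  (strict_neg_type hd (fun x => x \in A) 1 ->
   (q%:E <= gen_roundness hd (fun x => x \in A))%E).
Proof.
have [A_strict|A_not] := pselect (strict_neg_type hd (fun x => x \in A) 1); last first.
  by exists 2 => [|/A_not]; first lra.
have [q q1 Aq] := cube_gr_exponent A_strict.
by exists q => // _; apply: gr_exponent_le_gen_roundness Aq; rewrite ltW // (lt_trans ltr01).
Qed.

End hamming_cube.

Lemma finite_uniform_bound {R : realDomainType} {I : finType} (P : I -> R -> Prop) :
  (forall i q q', q' <= q -> P i q -> P i q') ->
  (forall i, exists2 q, 1 < q & P i q) -> exists2 q, 1 < q & forall i, P i q.
Proof.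
move=> P_down P_ex.
suff [q q1 Pq] : exists2 q, 1 < q & forall i, i \in enum I -> P i q.
  by exists q => // i; apply: Pq; rewrite mem_enum.
elim: (enum I) => [|i s [q q1 Pq]]; first by exists 2 => //; lra.
have [qi qi1 Pqi] := P_ex i.
exists (Num.min q qi); first by rewrite lt_min q1 qi1.
move=> j; rewrite inE => /orP[/eqP ->|js].
  by apply: P_down Pqi; rewrite ge_min lexx orbT.
by apply: P_down (Pq j js); rewrite ge_min lexx.
Qed.

Theorem corollary4p6 (R : realType) (n : nat) (hn : (1 <= n)%N) :
  exists q : R, 1 < q /\
    forall S : set (cube n),
      strict_neg_type (@hamming_dist R n) S 1 ->
      (q%:E <= gen_roundness (@hamming_dist R n) S)%E.
Proof.
have [q q1 Pq] := finite_uniform_bound (fun (A : {set cube n}) (q : R) =>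
  strict_neg_type (@hamming_dist R n) (fun x => x \in A) 1 ->
  (q%:E <= gen_roundness (@hamming_dist R n) (fun x => x \in A))%E)
  (fun A q q' q'q PAq A_strict => le_trans (lee_tofin q'q) (PAq A_strict))
  cube_set_roundness_bound.
exists q; split => // S.
have -> : S = (fun x => x \in [set x | `[< S x >]]%SET).
  by apply/funext => x; apply/propext; rewrite inE asboolE.
exact: Pq.
Qed.
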